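(* Let $X$ be a Banach space and $Y$ a closed subspace of $X$ satisfying the $(\ast)$-condition, witnessed by a projection $P$ on $X^\ast$, and let $\delta_{\{Y\}}(\varepsilon)=\inf\{\|\varphi\|-\|P\varphi\|:\varphi\in B_{X^\ast},\ \|\varphi-P\varphi\|\ge\varepsilon\}$ (with $\inf\emptyset=\infty$). Let $\alpha$ be an ordinal and $\varepsilon>0$. If $\varphi\in s^\alpha_{3\varepsilon}(B_{X^\ast})$ and $\|\varphi|_Y\|>1-\delta_{\{Y\}}(\varepsilon)$, then $\varphi|_Y\in s^\alpha_\varepsilon(B_{Y^\ast})$.
   Context: $Y$ satisfies the $(\ast)$-condition, witnessed by $P$, if $P$ is a linear projection on $X^\ast$ with $\ker P=Y^\perp$, $\|P\|\le1$, and for every $\varepsilon>0$ there is $\delta(\varepsilon)>0$ with $\|\varphi-P\varphi\|<\varepsilon$ whenever $\|\varphi\|=1$ and $\|\varphi+P\varphi\|>2-\delta(\varepsilon)$. Szlenk derivations: for weak*-compact $K$ in a dual space, $s_\varepsilon(K)=\{x^\ast\in K:\ \text{every weak*-neighborhood } V \text{ of } x^\ast \text{ has } \mathrm{diam}(V\cap K)>\varepsilon\}$, $s^0_\varepsilon(K)=K$, $s^{\beta+1}_\varepsilon(K)=s_\varepsilon(s^\beta_\varepsilon(K))$, $s^\alpha_\varepsilon(K)=\bigcap_{\beta<\alpha}s^\beta_\varepsilon(K)$ for limit $\alpha$. *)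

From HB Require Import structures.
From mathcomp Require Import all_boot all_order all_algebra.
From mathcomp Require Import all_classical all_reals all_analysis.
Set Implicit Arguments. Unset Strict Implicit. Unset Printing Implicit Defensive.
Import Order.TTheory GRing.Theory Num.Theory.
Import numFieldNormedType.Exports.
Local Open Scope classical_set_scope.
Local Open Scope ring_scope.

(* An ordinal alpha is represented as an element of a well-ordered type W;
   the transfinite iteration up to alpha depends only on the initial segment
   of W below alpha, i.e. on the order type alpha. *)
Record wellorder := WellOrder {
  wo_car :> Type;
  wo_lt : wo_car -> wo_car -> Prop;
  wo_wf : well_founded wo_lt;
  wo_trans : forall x y z, wo_lt x y -> wo_lt y z -> wo_lt x z;
  wo_total : forall x y, wo_lt x y \/ x = y \/ wo_lt y x }.

Definition wo_is_pred (W : wellorder) (g b : W) : Prop :=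
  wo_lt g b /\ forall d, wo_lt d b -> d = g \/ wo_lt d g.

(* One step of transfinite recursion:
   beta = 0       : K
   beta = gamma+1 : s (iterate gamma)
   beta limit     : intersection of iterates gamma < beta *)
Definition iter_step (T : Type) (W : wellorder) (s : set T -> set T) (K : set T)
  (b : W) (rec : forall g : W, wo_lt g b -> set T) : set T :=
  match pselect (exists g, wo_is_pred g b) with
  | left H => let (g, Hg) := cid H in s (rec g (proj1 Hg))
  | right _ =>
      if pselect (exists g, wo_lt g b)
      then [set x | forall g (h : wo_lt g b), rec g h x]
      else K
  end.

Definition transfinite_iter (T : Type) (W : wellorder) (s : set T -> set T)
  (K : set T) : W -> set T :=
  Fix (@wo_wf W) (fun _ => set T) (@iter_step T W s K).

Section Dual.
Context {R : realType} {V : normedModType R}.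

Definition is_dual (f : V -> R) : Prop :=
  (forall (a : R) (x y : V), f (a *: x + y) = a * f x + f y) /\ continuous f.

Definition dnorm (f : V -> R) : R :=
  sup [set `|f x| | x in [set x : V | `|x| <= 1]].

Definition dual_ball : set (V -> R) := [set f | is_dual f /\ dnorm f <= 1].

Definition wstar_open (U : set (V -> R)) : Prop :=
  forall f, U f -> exists (xs : seq V) (r : R), 0 < r /\
    forall g, is_dual g -> (forall x, x \in xs -> `|g x - f x| < r) -> U g.

Definition wstar_nbhd (f : V -> R) (N : set (V -> R)) : Prop :=
  exists U, wstar_open U /\ U f /\ (forall g, is_dual g -> U g -> N g).

Definition ddiam (A : set (V -> R)) : \bar R :=
  ereal_sup [set r | exists g h, A g /\ A h /\ r = (dnorm (fun x => g x - h x))%:E].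

Definition szlenk_deriv (eps : R) (K : set (V -> R)) : set (V -> R) :=
  [set f | K f /\ forall N, wstar_nbhd f N -> (eps%:E < ddiam (N `&` K))%E].

End Dual.

Arguments dual_ball {R} V.

(* Y is a closed subspace of X, given as the range of a linear isometry iota.
   Y^perp = { phi in X^* | phi o iota = 0 }. *)
Definition star_condition {R : realType} {X Y : normedModType R}
  (iota : Y -> X) (P : (X -> R) -> (X -> R)) : Prop :=
  (forall phi, is_dual phi -> is_dual (P phi)) /\
  [/\ (forall (a : R) phi psi, is_dual phi -> is_dual psi ->
          P (fun x => a * phi x + psi x) = (fun x => a * P phi x + P psi x)),
      (forall phi, is_dual phi -> P (P phi) = P phi),
      (forall phi, is_dual phi ->
          (P phi = (fun _ => 0) <-> forall y, phi (iota y) = 0)),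
      (forall phi, is_dual phi -> dnorm (P phi) <= dnorm phi)
    & (forall e : R, 0 < e -> exists d : R, 0 < d /\
         forall phi, is_dual phi -> dnorm phi = 1 ->
           dnorm (fun x => phi x + P phi x) > 2 - d ->
           dnorm (fun x => phi x - P phi x) < e)].

Definition delta_Y {R : realType} {X : normedModType R}
  (P : (X -> R) -> (X -> R)) (eps : R) : \bar R :=
  ereal_inf [set ((dnorm phi - dnorm (P phi))%:E) | phi in
     [set phi | dual_ball X phi /\ eps <= dnorm (fun x => phi x - P phi x)]].

(* Write phi|_Y for phi \o iota.  Since ker P = Y^perp and ||P|| <= 1, Hahn-Banach
   gives ||P chi|| = ||chi|_Y||, hence for all phi, psi
     ||phi - psi|| <= ||phi - P phi|| + ||(phi - psi)|_Y|| + ||psi - P psi||.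
   If ||phi|_Y|| > 1 - delta_{Y}(eps), the same holds on a weak*-neighbourhood of
   phi, and there every h in the unit ball has ||h|| - ||P h|| < delta_{Y}(eps),
   so ||h - P h|| < eps by definition of delta_{Y}.  So two functionals near phi at distance > 3 eps
   restrict to functionals at distance > eps, and restriction is weak*-continuous;
   a transfinite induction on alpha concludes.  Only the projection part of the
   (ast)-condition is used. *)

From HB Require Import structures.
From mathcomp Require Import all_boot all_order all_algebra.
From mathcomp Require Import all_classical all_reals all_analysis.
From mathcomp Require Import lra ring.
Import Order.TTheory GRing.Theory Num.Theory.
Import numFieldNormedType.Exports.
Local Open Scope classical_set_scope.
Local Open Scope ring_scope.
Set Implicit Arguments. Unset Strict Implicit. Unset Printing Implicit Defensive.

Section DualNorm.
Context {R : realType} {V : normedModType R}.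
Implicit Types (f g : V -> R) (x : V).

Definition linear_functional f :=
  forall (a : R) x y, f (a *: x + y) = a * f x + f y.

Lemma linear_functional0 f : linear_functional f -> f 0 = 0.
Proof. by move=> lf; have := lf 1 0 0; rewrite scale1r addr0 mul1r; lra. Qed.

Lemma linear_functionalZ f a x : linear_functional f -> f (a *: x) = a * f x.
Proof. by move=> lf; rewrite -[a *: x]addr0 lf linear_functional0 // addr0. Qed.

Lemma linear_functionalB f x y : linear_functional f -> f (x - y) = f x - f y.
Proof. by move=> lf; rewrite addrC -scaleN1r lf mulN1r addrC. Qed.

Lemma dual_linear f : is_dual f -> linear_functional f.
Proof. by case. Qed.

Lemma dual_bounded f : is_dual f ->
  exists2 M : R, 0 <= M & forall x, `|f x| <= M * `|x|.
Proof.
move=> [lf cf]; have := cf 0 => /cvgrPdist_lt /(_ 1 ltr01).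
rewrite linear_functional0 // => /nbhs_ballP [e /= e0 He].
exists (2 / e) => [|x]; first by rewrite divr_ge0 // ltW.
have [->|x0] := eqVneq x 0; first by rewrite linear_functional0 // !normr0 mulr0.
have nx : 0 < `|x| by rewrite normr_gt0.
have k0 : 0 < e / 2 / `|x| by rewrite !divr_gt0.
have : `|f ((e / 2 / `|x|) *: x)| < 1.
  have := He ((e / 2 / `|x|) *: x); rewrite -ball_normE /ball_ /= !sub0r !normrN.
  by apply; rewrite normrZ gtr0_norm // divfK ?gt_eqF //; lra.
rewrite linear_functionalZ // normrM gtr0_norm // => hu.
rewrite -(ler_pM2l k0) (_ : _ * (2 / e * _) = 1) ?ltW //.
by field; rewrite ?gt_eqF.
Qed.

Let dnorm_set f := [set `|f x| | x in [set x : V | `|x| <= 1]].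

Let dnorm_set0 f : linear_functional f -> dnorm_set f 0.
Proof. by move=> lf; exists 0; rewrite /= ?normr0 ?linear_functional0 ?normr0. Qed.

Let dnorm_set_ub f : is_dual f -> has_ubound (dnorm_set f).
Proof.
move=> /dual_bounded [M M0 HM]; exists M => _ [x /= x1 <-].
by rewrite (le_trans (HM x)) // ler_piMr.
Qed.

Lemma dual_dnorm_ge0 f : is_dual f -> 0 <= dnorm f.
Proof. by move=> df; apply: (ub_le_sup (dnorm_set_ub df)); exact/dnorm_set0/dual_linear. Qed.

Lemma dnorm_ub f x : is_dual f -> `|f x| <= dnorm f * `|x|.
Proof.
move=> df; have lf := dual_linear df.
have [->|x0] := eqVneq x 0; first by rewrite linear_functional0 // !normr0 mulr0.
have nx : 0 < `|x| by rewrite normr_gt0.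
have : `|f (`|x|^-1 *: x)| <= dnorm f.
  apply: (ub_le_sup (dnorm_set_ub df)); exists (`|x|^-1 *: x) => //=.
  by rewrite normrZ gtr0_norm ?invr_gt0 // mulVf ?gt_eqF.
rewrite linear_functionalZ // normrM gtr0_norm ?invr_gt0 //.
by rewrite ler_pdivrMl // mulrC.
Qed.

Lemma dnorm_le f c : linear_functional f -> 0 <= c ->
  (forall x, `|f x| <= c * `|x|) -> dnorm f <= c.
Proof.
move=> lf c0 H; apply: ge_sup; first by exists 0; exact: dnorm_set0.
by move=> _ [x /= x1 <-]; rewrite (le_trans (H x)) // ler_piMr.
Qed.

Lemma dnorm_gt f m : is_dual f -> m < dnorm f ->
  exists2 x, `|x| <= 1 & m < `|f x|.
Proof.
move=> df /(sup_gt _) []; first by exists 0; exact/dnorm_set0/dual_linear.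
by move=> _ [x /= x1 <-] h; exists x.
Qed.

Lemma bounded_dual f M : linear_functional f ->
  (forall x, `|f x| <= M * `|x|) -> is_dual f.
Proof.
move=> lf fM; split => // x; apply/cvgrPdist_lt => e e0.
have M1 : 0 < `|M| + 1 by rewrite ltr_pwDr.
near=> t; rewrite -linear_functionalB // (le_lt_trans (fM _)) //.
rewrite (@le_lt_trans _ _ ((`|M| + 1) * `|x - t|)) //.
  by rewrite ler_wpM2r // (le_trans (ler_norm _)) // lerDl.
rewrite mulrC -ltr_pdivlMr //; near: t.
by apply: cvgr_dist_lt; rewrite ?divr_gt0.
Unshelve. all: by end_near.
Qed.

Lemma dual_sub f g : is_dual f -> is_dual g -> is_dual (fun x => f x - g x).
Proof.
move=> df dg; apply: (@bounded_dual _ (dnorm f + dnorm g)).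
  by move=> a x y; rewrite (dual_linear df) (dual_linear dg); ring.
by move=> x; rewrite (le_trans (ler_normB _ _)) // mulrDl lerD ?dnorm_ub.
Qed.

End DualNorm.

Section HahnBanach.
Context {R : realType} {V Y : normedModType R} (iota : Y -> V)
  (iota_lin : forall (a : R) (y z : Y), iota (a *: y + z) = a *: iota y + iota z)
  (f : Y -> R) (lf : linear_functional f) (c : R) (c0 : 0 <= c)
  (fc : forall y, f y <= c * `|iota y|).
Implicit Types (G : set (V * R)) (x : V) (a : R).

Definition base_graph : set (V * R) := [set (iota y, f y) | y in setT].

Definition dominated_graph G :=
  [/\ forall x a b, G (x, a) -> G (x, b) -> a = b,
      forall t x y a b, G (x, a) -> G (y, b) -> G (t *: x + y, t * a + b),
      forall x a, G (x, a) -> a <= c * `|x|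
    & base_graph `<=` G].

Lemma dominated_base_graph : dominated_graph base_graph.
Proof.
have iotaB y z : iota (y - z) = iota y - iota z.
  by rewrite addrC -scaleN1r iota_lin scaleN1r addrC.
split.
- move=> x a b [y _ [<- <-]] [z _ [E <-]].
  have := fc (y - z); have := fc (z - y).
  by rewrite !iotaB !(linear_functionalB _ _ lf) E subrr normr0 mulr0; lra.
- move=> t _ _ _ _ [y _ [<- <-]] [z _ [<- <-]].
  by exists (t *: y + z) => //; rewrite iota_lin lf.
- by move=> x a [y _ [<- <-]].
- by [].
Qed.

Section Extension.
Variables (G : set (V * R)) (dG : dominated_graph G).

Lemma dominated_graph0 : G (0, 0).
Proof.
case: dG => [_ L _ B]; have h : G (iota 0, f 0) by apply: B; exists 0.
by have := L (-1) _ _ _ _ h h; rewrite scaleN1r mulN1r !addNr.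
Qed.

Lemma dominated_graphZ t x a : G (x, a) -> G (t *: x, t * a).
Proof.
by case: dG => [_ L _ _] h; have := L t _ _ _ _ h dominated_graph0; rewrite !addr0.
Qed.

Lemma dominated_graphD x y a b : G (x, a) -> G (y, b) -> G (x + y, a + b).
Proof.
by case: dG => [_ L _ _] h1 h2; have := L 1 _ _ _ _ h1 h2; rewrite scale1r mul1r.
Qed.

Lemma dominated_graph_gap x0 : exists ce,
  (forall y b, G (y, b) -> b - c * `|y - x0| <= ce) /\
  (forall z d, G (z, d) -> ce <= c * `|z + x0| - d).
Proof.
case: (dG) => [_ _ Dm _].
pose S := [set p.2 - c * `|p.1 - x0| | p in G].
have key z d y b : G (z, d) -> G (y, b) -> b - c * `|y - x0| <= c * `|z + x0| - d.
  move=> hz hy; have := Dm _ _ (dominated_graphD hy hz).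
  have : `|y + z| <= `|y - x0| + `|z + x0|.
    by rewrite (_ : y + z = (y - x0) + (z + x0)) ?ler_normD // addrACA addNr addr0.
  by move=> /(ler_wpM2l c0); rewrite mulrDr; lra.
have S_ub : ubound S (c * `|0 + x0| - 0).
  by move=> _ [[y b] hy <-]; exact: key dominated_graph0 hy.
exists (sup S); split.
- by move=> y b hy; apply: (ub_le_sup (ex_intro _ _ S_ub)); exists (y, b).
- move=> z d hz; apply: ge_sup => [|_ [[y b] hy <-]]; last exact: key hz hy.
  by exists (0 - c * `|0 - x0|), (0, 0); first exact: dominated_graph0.
Qed.

Section Adjoin.
Variables (x0 : V) (ce : R).
Hypotheses (x0_new : ~ exists a, G (x0, a))
  (ce_lb : forall y b, G (y, b) -> b - c * `|y - x0| <= ce)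
  (ce_ub : forall z d, G (z, d) -> ce <= c * `|z + x0| - d).

Definition graph_adjoin : set (V * R) :=
  [set q | exists x a t, G (x, a) /\ q = (x + t *: x0, a + t * ce)].

Let scale_normD (s : R) x v : 0 < s -> s * `|s^-1 *: x + v| = `|x + s *: v|.
Proof.
move=> s0; rewrite -[s in s * _]gtr0_norm // -normrZ scalerDr scalerA.
by rewrite mulfV ?gt_eqF ?scale1r.
Qed.

Lemma graph_adjoin_dominated t x a : G (x, a) -> a + t * ce <= c * `|x + t *: x0|.
Proof.
case: (dG) => [_ _ Dm _] hx.
have [t0|t_neg|<-] := ltgtP 0 t; last by rewrite scale0r mul0r !addr0; exact: Dm.
- have := ler_wpM2l (ltW t0) (ce_ub (dominated_graphZ t^-1 hx)).
  rewrite mulrBr mulrCA scale_normD // mulrA mulfV ?gt_eqF // mul1r; lra.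
- have s0 : 0 < - t by rewrite oppr_gt0.
  have := ler_wpM2l (ltW s0) (ce_lb (dominated_graphZ (- t)^-1 hx)).
  rewrite mulrBr mulrA mulfV ?gt_eqF // mul1r mulrCA scale_normD //.
  rewrite scaleNr scalerN opprK; lra.
Qed.

Lemma graph_adjoin_functional v a1 a2 :
  graph_adjoin (v, a1) -> graph_adjoin (v, a2) -> a1 = a2.
Proof.
case: (dG) => [Fn _ _ _].
move=> [x [a [t [hx [-> ->]]]]] [x' [a' [t' [hx' [E ->]]]]].
have [tt'|tt'] := eqVneq t t'.
  by move: E hx'; rewrite tt' => /addIr <- /(Fn _ _ _ hx) ->.
exfalso; apply: x0_new; exists ((t - t')^-1 * (a' - a)).
have Ex : x' - x = (t - t') *: x0.
  rewrite -[x'](addrK (t' *: x0)) -E scalerBl.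
  by rewrite addrAC [x + _ - x]addrAC subrr add0r.
have -> : x0 = (t - t')^-1 *: (x' - x).
  by rewrite Ex scalerA mulVf ?subr_eq0 ?scale1r.
apply: dominated_graphZ.
by have := dominated_graphD hx' (dominated_graphZ (-1) hx); rewrite scaleN1r mulN1r.
Qed.

Lemma dominated_graph_adjoin : dominated_graph graph_adjoin.
Proof.
case: (dG) => [_ L _ B]; split.
- exact: graph_adjoin_functional.
- move=> s v w a1 b1 [x [a [t [hx [-> ->]]]]] [y [b [u [hy [-> ->]]]]].
  exists (s *: x + y), (s * a + b), (s * t + u); split; first exact: L.
  by congr pair; [rewrite scalerDr scalerA scalerDl addrACA | ring].
- by move=> v b [x [a [t [hx [-> ->]]]]]; exact: graph_adjoin_dominated.
- move=> [v b] /B hp; exists v, b, 0.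
  by rewrite scale0r mul0r !addr0.
Qed.

End Adjoin.

Lemma dominated_graph_extend x0 : ~ (exists a, G (x0, a)) ->
  exists2 G1, dominated_graph G1 & G `<=` G1 /\ exists a, G1 (x0, a).
Proof.
move=> x0_new; have [ce [ce_lb ce_ub]] := dominated_graph_gap x0.
exists (graph_adjoin x0 ce); first exact: dominated_graph_adjoin.
split; first by move=> [x a] hx; exists x, a, 0; rewrite scale0r mul0r !addr0.
exists ce, 0, 0, 1; split; first exact: dominated_graph0.
by rewrite scale1r mul1r !add0r.
Qed.

End Extension.

(* Adjoining [base_graph] gives the empty chain an upper bound too. *)
Lemma dominated_graph_bigcup (F : set (set (V * R))) :
  F `<=` [set G | dominated_graph (base_graph `|` G)] -> total_on F subset ->
  dominated_graph (base_graph `|` \bigcup_(G in F) G).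
Proof.
move=> dF totF; set U := _ `|` _.
have common p q : U p -> U q ->
    exists2 H, dominated_graph H & [/\ H `<=` U, H p & H q].
  have subU G : F G -> base_graph `|` G `<=` U.
    by move=> FG z [bz|Gz]; [left | right; exists G].
  move=> [bp|[G FG Gp]] [bq|[H FH Hq]].
  - by exists base_graph; [exact: dominated_base_graph | split => // z bz; left].
  - by exists (base_graph `|` H); [exact: dF | split; [exact: subU | left | right]].
  - by exists (base_graph `|` G); [exact: dF | split; [exact: subU | right | left]].
  - have [GH|HG] := totF _ _ FG FH.
    + exists (base_graph `|` H); first exact: dF.
      by split; [exact: subU | right; exact: GH | right].
    + exists (base_graph `|` G); first exact: dF.
      by split; [exact: subU | right | right; exact: HG].
split.
- move=> x a b ha hb; have [H [Fn _ _ _] [_ h1 h2]] := common _ _ ha hb.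
  exact: Fn h1 h2.
- move=> t x y a b ha hb; have [H [_ L _ _] [sH h1 h2]] := common _ _ ha hb.
  exact/sH/L.
- move=> x a ha; have [H [_ _ Dm _] [_ h _]] := common _ _ ha ha; exact: Dm h.
- by move=> p bp; left.
Qed.

Theorem hahn_banach : exists g : V -> R,
  [/\ linear_functional g, forall y, g (iota y) = f y
     & forall x, `|g x| <= c * `|x|].
Proof.
have [A [dA maxA]] := Zorn_bigcup dominated_graph_bigcup.
set M := base_graph `|` A in dA.
have tot x : exists a, M (x, a).
  apply: contrapT => x_new.
  have [G1 dG1 [MG1 [a G1x]]] := dominated_graph_extend dA x_new.
  have bG1 : base_graph `<=` G1 by case: dG1.
  apply: (maxA G1); last by rewrite /= (setUidr bG1).
  split; first by move=> p Ap; apply/MG1; right.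
  by move=> G1A; apply: x_new; exists a; right; exact: G1A.
pose g x := projT1 (cid (tot x)).
have gP x : M (x, g x) by rewrite /g; case: cid.
case: (dA) => [Fn L Dm B].
exists g; split.
- by move=> a x y; apply: Fn (gP _) (L _ _ _ _ _ (gP x) (gP y)).
- by move=> y; apply: Fn (gP _) (B _ _); exists y.
- move=> x; have := Dm _ _ (gP x).
  have := Dm _ _ (dominated_graphZ dA (-1) (gP x)).
  by rewrite scaleN1r mulN1r normrN ler_norml => ? ?; apply/andP; split; lra.
Qed.

End HahnBanach.

Lemma lte_fin_between {R : realType} (a : \bar R) (x : R) :
  (a < x%:E)%E -> exists2 m : R, (a < m%:E)%E & m < x.
Proof.
case: a => [a||] // ax; last by exists (x - 1); [exact: ltNyr | lra].
by exists ((a + x) / 2); rewrite ?lte_fin in ax *; lra.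
Qed.

Section WeakStar.
Context {R : realType} {V : normedModType R}.
Implicit Types (U : set (V -> R)) (x : V).

Lemma wstar_openT : wstar_open (@setT (V -> R)).
Proof. by move=> f _; exists [::], 1. Qed.

Lemma wstar_openI U1 U2 : wstar_open U1 -> wstar_open U2 -> wstar_open (U1 `&` U2).
Proof.
move=> o1 o2 f [/o1 [xs1 [r1 [r1_gt0 H1]]] /o2 [xs2 [r2 [r2_gt0 H2]]]].
exists (xs1 ++ xs2), (Order.min r1 r2); split; first by rewrite lt_min r1_gt0.
move=> g dg near_g; split; [apply: H1 | apply: H2] => // x xs_x;
  by move: (near_g x); rewrite mem_cat xs_x ?orbT lt_min => /(_ isT) /andP [].
Qed.

Lemma wstar_open_eval (O : set R) x : open O -> wstar_open [set h | O (h x)].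
Proof.
move=> oO f /= Ofx.
have /nbhs_ballP [e /= e_gt0 eO] := open_nbhs_nbhs (conj oO Ofx).
exists [:: x], e; split => // g _ /(_ x (mem_head _ _)) gx.
by apply: eO; rewrite -ball_normE /= distrC.
Qed.

Lemma wstar_open_near x (c r : R) : wstar_open [set h | `|h x - c| < r].
Proof.
rewrite (_ : [set h | _] = [set h | ball c r (h x)]).
  exact/wstar_open_eval/ball_open.
by apply/seteqP; split => h; rewrite /= -ball_normE /= distrC.
Qed.

Lemma wstar_open_norm_gt x (m : R) : wstar_open [set h | m < `|h x|].
Proof.
apply: (@wstar_open_eval (Num.norm @^-1` [set t | m < t])).
by apply: open_comp => [t _|]; [exact: norm_continuous | exact: open_gt].
Qed.

Lemma wstar_open_all (I : eqType) (U : I -> set (V -> R)) (s : seq I) :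
  (forall i, wstar_open (U i)) -> wstar_open [set h | forall i, i \in s -> U i h].
Proof.
move=> oU; elim: s => [|i s IH].
  by rewrite (_ : [set h | _] = setT); [exact: wstar_openT | apply/seteqP].
rewrite (_ : [set h | _] = U i `&` [set h | forall j, j \in s -> U j h]).
  exact: wstar_openI.
apply/seteqP; split => h /=.
  by move=> Uh; split => [|j js]; apply: Uh; rewrite in_cons ?eqxx ?js ?orbT.
by move=> [Uih Uh] j; rewrite in_cons => /orP [/eqP -> //|]; exact: Uh.
Qed.

Lemma ddiam_ge (A : set (V -> R)) g h : A g -> A h ->
  ((dnorm (fun x => g x - h x))%:E <= ddiam A)%E.
Proof. by move=> Ag Ah; apply: ereal_sup_ubound; exists g, h. Qed.

Lemma ddiam_gt (A : set (V -> R)) (e : R) : (e%:E < ddiam A)%E ->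
  exists g h, [/\ A g, A h & e < dnorm (fun x => g x - h x)].
Proof. by move=> /ereal_sup_gt [_ [g [h [Ag [Ah ->]]]]]; exists g, h. Qed.

End WeakStar.

Lemma transfinite_iterE {T : Type} {W : wellorder} (s : set T -> set T)
    (K : set T) (b : W) :
  transfinite_iter s K b = @iter_step T W s K b (fun g _ => transfinite_iter s K g).
Proof.
rewrite /transfinite_iter Fix_eq // => x f g fg; rewrite /iter_step.
case: pselect => [h|_]; first by case: (cid h) => g' ?; rewrite fg.
case: pselect => //= _; apply/seteqP; split => y fy g' h'.
  by rewrite -fg; exact: fy.
by rewrite fg; exact: fy.
Qed.

Section TransfiniteIteration.
Context {T : Type} {W : wellorder} (s : set T -> set T) (K : set T).
Hypothesis s_sub : forall A, s A `<=` A.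

Lemma transfinite_iter_sub (b : W) : transfinite_iter s K b `<=` K.
Proof.
elim/(well_founded_ind (@wo_wf W)): b => b IH x.
rewrite transfinite_iterE /iter_step.
case: pselect => [h|_]; first by case: (cid h) => g [glt _] /s_sub; exact: IH.
by case: pselect => //= [[g glt]] /(_ g glt); exact: IH.
Qed.

Lemma transfinite_iter_transfer {T' : Type} (s' : set T' -> set T') (K' : set T')
    (F : T -> T') (Q : T -> Prop) :
  (forall x, K x -> Q x -> K' (F x)) ->
  (forall A A', A `<=` K -> (forall x, A x -> Q x -> A' (F x)) ->
     forall x, s A x -> Q x -> s' A' (F x)) ->
  forall (b : W) x, transfinite_iter s K b x -> Q x ->
    transfinite_iter s' K' b (F x).
Proof.
move=> base step; elim/(well_founded_ind (@wo_wf W)) => b IH x.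
rewrite !transfinite_iterE /iter_step.
case: pselect => [h|_].
  case: (cid h) => g [glt _] /=.
  by apply: step; [exact: transfinite_iter_sub | exact: IH].
by case: pselect => /= [_ Hx Qx g glt|_]; [exact: IH (Hx g glt) Qx | exact: base].
Qed.

End TransfiniteIteration.

Section Restriction.
Context {R : realType} {X Y : normedModType R} (iota : Y -> X)
  (iota_lin : forall (a : R) (y z : Y), iota (a *: y + z) = a *: iota y + iota z)
  (iota_isom : forall y : Y, `|iota y| = `|y|).

Let comp_linear (f : X -> R) : is_dual f -> linear_functional (f \o iota).
Proof. by move=> df a y z /=; rewrite iota_lin (dual_linear df). Qed.

Let comp_bound (f : X -> R) : is_dual f -> forall y, `|f (iota y)| <= dnorm f * `|y|.
Proof. by move=> df y; rewrite -iota_isom dnorm_ub. Qed.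

Lemma dual_comp (f : X -> R) : is_dual f -> is_dual (f \o iota).
Proof. by move=> df; apply: bounded_dual (comp_linear df) (comp_bound df). Qed.

Lemma dnorm_comp_le (f : X -> R) : is_dual f -> dnorm (f \o iota) <= dnorm f.
Proof.
by move=> df; apply: dnorm_le (comp_linear df) (dual_dnorm_ge0 df) (comp_bound df).
Qed.

Lemma dual_ball_comp (f : X -> R) : dual_ball X f -> dual_ball Y (f \o iota).
Proof.
by move=> [df f1]; split; [exact: dual_comp | exact: le_trans (dnorm_comp_le df) f1].
Qed.

Context (P : (X -> R) -> (X -> R)) (HP : star_condition iota P).

Let P_dual (f : X -> R) : is_dual f -> is_dual (P f).
Proof. by case: HP => Pd _; exact: Pd. Qed.

Lemma PB (f g : X -> R) : is_dual f -> is_dual g ->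
  P (fun x => f x - g x) = (fun x => P f x - P g x).
Proof.
case: HP => _ [Plin _ _ _ _] df dg.
have -> : (fun x => f x - g x) = (fun x => -1 * g x + f x) by apply: funext => x; ring.
by rewrite Plin //; apply: funext => x; ring.
Qed.

Lemma P_comp (f : X -> R) : is_dual f -> P f \o iota = f \o iota.
Proof.
case: HP => _ [_ Pidem Pker _ _] df.
have dPf := P_dual df; have dg := dual_sub dPf df.
have /(Pker _ dg) Pg0 : P (fun x => P f x - f x) = (fun _ => 0).
  by rewrite PB // Pidem //; apply: funext => x; rewrite subrr.
by apply: funext => y /=; apply/eqP; rewrite -subr_eq0 Pg0.
Qed.

Lemma dnorm_P (f : X -> R) : is_dual f -> dnorm (P f) = dnorm (f \o iota).
Proof.
case: HP => _ [_ _ Pker Pnorm _] df; apply/eqP; rewrite eq_le; apply/andP; split.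
  have dfi := dual_comp df.
  have fi_bound y : (f \o iota) y <= dnorm (f \o iota) * `|iota y|.
    by rewrite iota_isom (le_trans (ler_norm _)) // dnorm_ub.
  have [xi [lxi xi_ext xi_bound]] :=
    hahn_banach iota_lin (dual_linear dfi) (dual_dnorm_ge0 dfi) fi_bound.
  have dxi : is_dual xi := bounded_dual lxi xi_bound.
  have /(Pker _ (dual_sub df dxi)) : forall y, f (iota y) - xi (iota y) = 0.
    by move=> y; rewrite xi_ext subrr.
  rewrite PB // => P_eq.
  have -> : P f = P xi.
    by apply: funext => x; have /= := congr1 (fun h => h x) P_eq; lra.
  exact: le_trans (Pnorm _ dxi) (dnorm_le lxi (dual_dnorm_ge0 dfi) xi_bound).
rewrite -(P_comp df); exact: dnorm_comp_le (P_dual df).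
Qed.

Lemma dnormB_le_restrict (f g : X -> R) : is_dual f -> is_dual g ->
  dnorm (fun x => f x - g x) <=
    dnorm (fun x => f x - P f x) + dnorm (fun y => f (iota y) - g (iota y))
    + dnorm (fun x => g x - P g x).
Proof.
move=> df dg; set chi := fun x => f x - g x.
have dchi : is_dual chi := dual_sub df dg.
have df' := dual_sub df (P_dual df); have dg' := dual_sub dg (P_dual dg).
have -> : dnorm (fun y => f (iota y) - g (iota y)) = dnorm (P chi) by rewrite dnorm_P.
apply: dnorm_le (dual_linear dchi) _ _.
  by rewrite !addr_ge0 ?dual_dnorm_ge0 //; exact: P_dual.
move=> x; have -> : chi x = (f x - P f x) + P chi x - (g x - P g x).
  by rewrite /chi PB //; ring.
rewrite !mulrDl (le_trans (ler_normB _ _)) // lerD ?(dnorm_ub _ dg') //.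
rewrite (le_trans (ler_normD _ _)) // lerD ?(dnorm_ub _ df') //.
exact: dnorm_ub (P_dual dchi).
Qed.

Definition large_restriction (eps : R) (f : X -> R) :=
  (1%:E - delta_Y P eps < (dnorm (f \o iota))%:E)%E.

Lemma dnorm_sub_P_lt (eps : R) (h : X -> R) : dual_ball X h ->
  large_restriction eps h ->
  dnorm (fun x => h x - P h x) < eps.
Proof.
move=> [dh h1]; rewrite /large_restriction -(dnorm_P dh) => Qh.
rewrite ltNge; apply/negP => far.
have : (delta_Y P eps <= (dnorm h - dnorm (P h))%:E)%E.
  by apply: ereal_inf_lbound; exists h.
by move: Qh; case: (delta_Y P eps) => [d||] //; rewrite ?lte_fin ?lee_fin; lra.
Qed.

Lemma szlenk_deriv_comp (eps : R) (A : set (X -> R)) (A' : set (Y -> R)) :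
  A `<=` dual_ball X ->
  (forall f, A f -> large_restriction eps f -> A' (f \o iota)) ->
  forall f, szlenk_deriv (3 * eps) A f -> large_restriction eps f ->
  szlenk_deriv eps A' (f \o iota).
Proof.
move=> A_ball AA' f [Af diam_f] Qf; split; first exact: AA'.
move=> N [U [oU [Uf UN]]].
have [ys [r [r_gt0 Ur]]] := oU _ Uf.
have [m Qm m_lt] := lte_fin_between Qf.
have [y0 y0_le1 m_lt_y0] := dnorm_gt (dual_comp (A_ball _ Af).1) m_lt.
(* On UX the restrictions stay large, so [dnorm_sub_P_lt] applies there. *)
pose UX := [set h : X -> R | m < `|h (iota y0)|] `&`
  [set h | forall y, y \in ys -> `|h (iota y) - f (iota y)| < r].
have UX_nbhd : wstar_nbhd f UX.
  exists UX; split; last split => //.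
  - apply: wstar_openI; first exact: wstar_open_norm_gt.
    by apply: wstar_open_all => y; exact: wstar_open_near.
  - by split => // y _; rewrite subrr normr0.
have near_f h : UX h -> A h ->
    [/\ N (h \o iota), A' (h \o iota) & dnorm (fun x => h x - P h x) < eps].
  move=> [h_m h_near] Ah; have [dh h1] := A_ball _ Ah.
  have dhi := dual_comp dh.
  have Qh : large_restriction eps h.
    apply: (lt_trans Qm); rewrite lte_fin (lt_le_trans h_m) //.
    by rewrite (le_trans (dnorm_ub _ dhi)) // ler_piMr ?dual_dnorm_ge0.
  by split; [exact: UN dhi (Ur _ dhi h_near) | exact: AA' | exact: dnorm_sub_P_lt].
have [f1 [f2 [[UX1 A1] [UX2 A2] diam12]]] := ddiam_gt (diam_f _ UX_nbhd).
have [N1 A'1 e1] := near_f _ UX1 A1; have [N2 A'2 e2] := near_f _ UX2 A2.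
apply: lt_le_trans (ddiam_ge (conj N1 A'1) (conj N2 A'2)); rewrite lte_fin /=.
by have := dnormB_le_restrict (A_ball _ A1).1 (A_ball _ A2).1; lra.
Qed.

End Restriction.

Theorem lemma3p8 (R : realType) (X : completeNormedModType R)
  (Y : normedModType R) (iota : Y -> X)
  (iota_lin : forall (a : R) (y z : Y), iota (a *: y + z) = a *: iota y + iota z)
  (iota_isom : forall y : Y, `|iota y| = `|y|)
  (iota_closed : closed (range iota))
  (P : (X -> R) -> (X -> R)) (HP : star_condition iota P)
  (W : wellorder) (alpha : W) (eps : R) (heps : 0 < eps) (phi : X -> R) :
  transfinite_iter (szlenk_deriv (3 * eps)) (dual_ball X) alpha phi ->
  (1%:E - delta_Y P eps < (dnorm (phi \o iota))%:E)%E ->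
  transfinite_iter (szlenk_deriv eps) (dual_ball Y) alpha (phi \o iota).
Proof.
apply: (transfinite_iter_transfer _ (F := fun f : X -> R => f \o iota)
  (Q := large_restriction iota P eps)).
- by move=> A f [].
- by move=> f /(dual_ball_comp iota_lin iota_isom).
- by move=> A A' A_ball AA' f; apply: szlenk_deriv_comp.
Qed.
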